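(* For every integer $d\ge 2$, $\mathcal Q_d$ is an open subset of $\mathcal C_d$ (and hence of $\mathcal A_d$).
   Context: A polynomial knot is a map $\phi:\mathbb R\to\mathbb R^3$ with real polynomial components which is a smooth embedding ($\phi$ injective and $\phi'(t)\ne0$ for all $t$). For $d\ge2$, $\mathcal A_d$ is the set of polynomial maps $t\mapsto(f(t),g(t),h(t))$ with $\deg f\le d-2$, $\deg g\le d-1$, $\deg h\le d$, topologized via the bijection with Euclidean $\mathbb R^{3d}$ sending $(f,g,h)$ to its coefficient vector $(a_0,\dots,a_{d-2},b_0,\dots,b_{d-1},c_0,\dots,c_d)$, where $f=\sum a_it^i$, $g=\sum b_it^i$, $h=\sum c_it^i$. $\mathcal C_d\subseteq\mathcal A_d$ is the subspace of maps with $\deg f=d-2$, $\deg g=d-1$, $\deg h=d$ exactly, and $\mathcal Q_d$ is the set of polynomial knots in $\mathcal C_d$. *)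

From Stdlib Require Import Reals.
Open Scope R_scope.

(* A point of A_d is represented by three coefficient sequences (a, b, c);
   only a_0..a_{d-2}, b_0..b_{d-1}, c_0..c_d matter. *)

Definition peval (a : nat -> R) (n : nat) (t : R) : R :=
  sum_f_R0 (fun i => a i * t ^ i) n.

Definition phiX (d : nat) (a : nat -> R) := peval a (d - 2).
Definition phiY (d : nat) (b : nat -> R) := peval b (d - 1).
Definition phiZ (d : nat) (c : nat -> R) := peval c d.

Definition inC (d : nat) (a b c : nat -> R) : Prop :=
  a (d - 2)%nat <> 0 /\ b (d - 1)%nat <> 0 /\ c d <> 0.

Definition is_poly_knot (d : nat) (a b c : nat -> R) : Prop :=
  (forall s t : R,
     phiX d a s = phiX d a t -> phiY d b s = phiY d b t ->
     phiZ d c s = phiZ d c t -> s = t) /\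
  (forall t : R, exists l1 l2 l3 : R,
     derivable_pt_lim (phiX d a) t l1 /\
     derivable_pt_lim (phiY d b) t l2 /\
     derivable_pt_lim (phiZ d c) t l3 /\
     ~ (l1 = 0 /\ l2 = 0 /\ l3 = 0)).

Definition inQ (d : nat) (a b c : nat -> R) : Prop :=
  inC d a b c /\ is_poly_knot d a b c.

(* (a',b',c') lies in the eps-ball (sup norm on R^{3d}, which induces the
   Euclidean topology) around (a,b,c) *)
Definition close (d : nat) (eps : R) (a b c a' b' c' : nat -> R) : Prop :=
  (forall i, (i <= d - 2)%nat -> Rabs (a' i - a i) < eps) /\
  (forall i, (i <= d - 1)%nat -> Rabs (b' i - b i) < eps) /\
  (forall i, (i <= d)%nat -> Rabs (c' i - c i) < eps).

(* Write Dp(s,t) = (p(s) - p(t)) / (s - t) for the divided difference of a polynomial p,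
   extended by p'(t) on the diagonal; it is a polynomial in (s,t) whose coefficients depend
   linearly on those of p.  The map (f,g,h) is a polynomial knot exactly when Df, Dg, Dh
   never vanish simultaneously.  One of d-1, d is odd; for the component q of that odd
   degree m, Dq is dominated by its leading part q_m (s^m - t^m)/(s - t), which is at least
   |q_m| max(|s|,|t|)^(m-1) / 2, so Dq has no zero far from the origin, uniformly for nearby
   coefficients.  On the remaining compact square |Df| + |Dg| + |Dh| has a positive minimum,
   and a perturbation of the coefficients moves it by an amount proportional to its size. *)

From Stdlib Require Import Reals Lra Lia Psatz ClassicalEpsilon.
Open Scope R_scope.

Lemma Rabs_le_iff x r : Rabs x <= r <-> - r <= x <= r.
Proof. unfold Rabs; destruct Rcase_abs; split; intros; lra. Qed.

Lemma Rabs_le_sum_f_R0 a n k : (k <= n)%nat -> Rabs (a k) <= sum_f_R0 (fun i => Rabs (a i)) n.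
Proof.
  induction n as [|n IH]; intros Hk; simpl.
  - replace k with 0%nat by lia. lra.
  - pose proof (Rabs_pos (a (S n))).
    destruct (Nat.eq_dec k (S n)) as [->|Hne].
    + pose proof (cond_pos_sum (fun i => Rabs (a i)) n (fun i => Rabs_pos _)). lra.
    + pose proof (IH ltac:(lia)). lra.
Qed.

Fixpoint pow_quot (k : nat) (s t : R) : R :=
  match k with O => 0 | S k => s ^ k + t * pow_quot k s t end.

Lemma pow_quotP k s t : (s - t) * pow_quot k s t = s ^ k - t ^ k.
Proof.
  induction k as [|k IH]; simpl; [ring|].
  replace ((s - t) * (s ^ k + t * pow_quot k s t))
    with ((s - t) * s ^ k + t * ((s - t) * pow_quot k s t)) by ring.
  rewrite IH. ring.
Qed.

Lemma pow_quotC k s t : pow_quot k s t = pow_quot k t s.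
Proof.
  destruct (Req_dec s t) as [->|Hst]; [reflexivity|].
  apply (Rmult_eq_reg_l (s - t)); [|lra].
  replace ((s - t) * pow_quot k t s) with (- ((t - s) * pow_quot k t s)) by ring.
  rewrite !pow_quotP. ring.
Qed.

Lemma pow_quot_diag k t : pow_quot k t t = INR k * t ^ pred k.
Proof.
  induction k as [|k IH]; simpl; [ring|].
  rewrite IH. destruct k as [|k]; simpl; [ring|].
  rewrite <- (S_INR k). rewrite S_INR. ring.
Qed.

Lemma pow_quotZ k l s t : pow_quot (S k) (l * s) (l * t) = l ^ k * pow_quot (S k) s t.
Proof.
  induction k as [|k IH]; [simpl; ring|].
  change (pow_quot (S (S k)) (l * s) (l * t))
    with ((l * s) ^ S k + l * t * pow_quot (S k) (l * s) (l * t)).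
  change (pow_quot (S (S k)) s t) with (s ^ S k + t * pow_quot (S k) s t).
  rewrite IH, Rpow_mult_distr. simpl. ring.
Qed.

Lemma pow_quot_bound k s t r : 0 <= r -> Rabs s <= r -> Rabs t <= r ->
  Rabs (pow_quot k s t) * r <= INR k * r ^ k.
Proof.
  intros Hr Hs Ht. induction k as [|k IH]; simpl pow_quot.
  - rewrite Rabs_R0. simpl. lra.
  - assert (Hsum : Rabs (s ^ k + t * pow_quot k s t) <= r ^ k + r * Rabs (pow_quot k s t)).
    { eapply Rle_trans; [apply Rabs_triang|]. rewrite Rabs_mult, <- RPow_abs.
      apply Rplus_le_compat.
      - apply pow_incr. split; [apply Rabs_pos|exact Hs].
      - apply Rmult_le_compat_r; [apply Rabs_pos|exact Ht]. }
    rewrite S_INR. simpl pow.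
    apply Rle_trans with ((r ^ k + r * Rabs (pow_quot k s t)) * r).
    + apply Rmult_le_compat_r; assumption.
    + nra.
Qed.

Lemma pow_quot_lipschitzl k s s' t r : 1 <= r -> Rabs s <= r -> Rabs s' <= r -> Rabs t <= r ->
  Rabs (pow_quot k s t - pow_quot k s' t) <= INR k * INR k * r ^ k * Rabs (s - s').
Proof.
  intros Hr Hs Hs' Ht. induction k as [|k IH]; simpl pow_quot.
  - rewrite Rminus_0_r, Rabs_R0. simpl. lra.
  - replace (s ^ k + t * pow_quot k s t - (s' ^ k + t * pow_quot k s' t))
      with ((s - s') * pow_quot k s s' + t * (pow_quot k s t - pow_quot k s' t))
      by (rewrite pow_quotP; ring).
    eapply Rle_trans; [apply Rabs_triang|]. rewrite !Rabs_mult.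
    pose proof (pow_quot_bound k s s' r ltac:(lra) Hs Hs') as Hb.
    pose proof (pos_INR k). pose proof (pow_R1_Rle r k Hr).
    pose proof (Rabs_pos (s - s')). pose proof (Rabs_pos t).
    pose proof (Rabs_pos (pow_quot k s s')).
    pose proof (Rabs_pos (pow_quot k s t - pow_quot k s' t)).
    rewrite S_INR. simpl pow.
    apply Rle_trans with
      (Rabs (s - s') * (INR k * r ^ k) + r * (INR k * INR k * r ^ k * Rabs (s - s'))).
    + apply Rplus_le_compat; [|apply Rmult_le_compat; lra].
      apply Rmult_le_compat_l; [lra|]. nra.
    + assert (0 <= INR k * r ^ k * Rabs (s - s') * (r - 1)) by (repeat apply Rmult_le_pos; lra).
      assert (0 <= INR k * INR k * r ^ k * Rabs (s - s')) by (repeat apply Rmult_le_pos; lra).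
      assert (0 <= r ^ k * Rabs (s - s')) by (apply Rmult_le_pos; lra).
      nra.
Qed.

Lemma pow_quot_lipschitz k s s' t t' r : 1 <= r ->
  Rabs s <= r -> Rabs s' <= r -> Rabs t <= r -> Rabs t' <= r ->
  Rabs (pow_quot k s t - pow_quot k s' t') <=
  INR k * INR k * r ^ k * (Rabs (s - s') + Rabs (t - t')).
Proof.
  intros. replace (pow_quot k s t - pow_quot k s' t')
    with ((pow_quot k s t - pow_quot k s' t) + (pow_quot k t s' - pow_quot k t' s'))
    by (rewrite (pow_quotC k s' t), (pow_quotC k s' t'); ring).
  eapply Rle_trans; [apply Rabs_triang|]. rewrite Rmult_plus_distr_l.
  apply Rplus_le_compat; apply pow_quot_lipschitzl; assumption.
Qed.

Lemma pow_quot_odd_one_lower j u : -1 <= u <= 1 -> 1 / 2 <= pow_quot (S (2 * j)) 1 u.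
Proof.
  intros Hu. destruct (Rle_dec 0 u) as [Hu0|Hu0].
  - (* all summands u^i are nonnegative and the first one is 1 *)
    enough (Hge1 : forall k, 1 <= pow_quot (S k) 1 u) by (specialize (Hge1 (2 * j)%nat); lra).
    induction k as [|k IH]; [simpl; lra|].
    change (pow_quot (S (S k)) 1 u) with (1 ^ S k + u * pow_quot (S k) 1 u).
    rewrite pow1. nra.
  - (* (1 - u) P = 1 - u^(2j+1) >= 1 and 1 - u <= 2 *)
    pose proof (pow_quotP (S (2 * j)) 1 u) as E. rewrite pow1 in E.
    assert (u ^ S (2 * j) <= 0).
    { rewrite <- tech_pow_Rmult, pow_mult.
      assert (0 <= (u ^ 2) ^ j) by (apply pow_le; nra). nra. }
    nra.
Qed.

Lemma pow_quot_odd_lower_aux j s t : Rabs t <= Rabs s ->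
  Rabs s ^ (2 * j) / 2 <= pow_quot (S (2 * j)) s t.
Proof.
  intros Hts.
  assert (Heven : forall x, x ^ (2 * j) = Rabs x ^ (2 * j)).
  { intros x. rewrite !pow_mult, <- !Rsqr_pow2, <- Rsqr_abs. reflexivity. }
  destruct (Req_dec s 0) as [->|Hs0].
  - assert (t = 0) by (rewrite Rabs_R0 in Hts; pose proof (Rabs_pos t);
      destruct (Req_dec t 0); [assumption|]; pose proof (Rabs_pos_lt t); lra). subst t.
    rewrite Rabs_R0. destruct j as [|j]; simpl; [lra|].
    rewrite pow_i by lia. simpl. lra.
  - replace (pow_quot (S (2 * j)) s t) with (pow_quot (S (2 * j)) (s * 1) (s * (t / s)))
      by (f_equal; field; exact Hs0).
    rewrite pow_quotZ, <- Heven.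
    assert (Hu : -1 <= t / s <= 1).
    { apply Rabs_le_iff. unfold Rdiv. rewrite Rabs_mult, Rabs_inv.
      apply Rmult_le_reg_r with (Rabs s); [apply Rabs_pos_lt; exact Hs0|].
      rewrite Rmult_assoc, Rinv_l by (apply Rabs_no_R0; exact Hs0). lra. }
    pose proof (pow_quot_odd_one_lower j (t / s) Hu).
    assert (0 <= s ^ (2 * j)) by (rewrite Heven; apply pow_le, Rabs_pos).
    nra.
Qed.

Lemma pow_quot_odd_lower j s t :
  Rmax (Rabs s) (Rabs t) ^ (2 * j) / 2 <= pow_quot (S (2 * j)) s t.
Proof.
  destruct (Rle_dec (Rabs t) (Rabs s)).
  - rewrite Rmax_left by assumption. apply pow_quot_odd_lower_aux. assumption.
  - rewrite Rmax_right, pow_quotC by lra. apply pow_quot_odd_lower_aux. lra.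
Qed.

Definition ddiff (a : nat -> R) (n : nat) (s t : R) : R :=
  sum_f_R0 (fun k => a k * pow_quot k s t) n.

Definition ddiff_const (n : nat) (r : R) : R := INR (S n) * INR n * r ^ n.

Lemma ddiff_const_ge0 n r : 0 <= r -> 0 <= ddiff_const n r.
Proof.
  intros Hr. unfold ddiff_const.
  repeat apply Rmult_le_pos; [apply pos_INR|apply pos_INR|apply pow_le; exact Hr].
Qed.

Lemma ddiffP a n s t : (s - t) * ddiff a n s t = peval a n s - peval a n t.
Proof.
  unfold ddiff, peval. rewrite scal_sum, <- minus_sum.
  apply sum_eq. intros k _.
  replace (a k * s ^ k - a k * t ^ k) with (a k * (s ^ k - t ^ k)) by ring.
  rewrite <- pow_quotP. ring.
Qed.

Lemma ddiff_sub a a' n s t : ddiff a' n s t - ddiff a n s t = ddiff (fun k => a' k - a k) n s t.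
Proof. unfold ddiff. rewrite <- minus_sum. apply sum_eq. intros k _. ring. Qed.

Lemma derivable_pt_lim_peval a n t : derivable_pt_lim (peval a n) t (ddiff a n t t).
Proof.
  unfold ddiff, peval. induction n as [|n IH].
  - simpl. rewrite Rmult_0_r.
    change (derivable_pt_lim (fun _ => a 0%nat * 1) t 0). apply derivable_pt_lim_const.
  - change (derivable_pt_lim ((fun t => sum_f_R0 (fun i => a i * t ^ i) n)
              + mult_real_fct (a (S n)) (fun y => y ^ S n)) t
      (sum_f_R0 (fun k => a k * pow_quot k t t) n + a (S n) * pow_quot (S n) t t)).
    apply derivable_pt_lim_plus; [exact IH|].
    rewrite pow_quot_diag. apply derivable_pt_lim_scal, derivable_pt_lim_pow.
Qed.

Lemma ddiff_bound a n s t r w : 1 <= r -> Rabs s <= r -> Rabs t <= r ->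
  (forall k, (k <= n)%nat -> Rabs (a k) <= w) ->
  Rabs (ddiff a n s t) * r <= w * ddiff_const n r.
Proof.
  intros Hr Hs Ht Hw. unfold ddiff, ddiff_const.
  apply Rle_trans with (sum_f_R0 (fun k => Rabs (a k * pow_quot k s t) * r) n).
  { rewrite <- scal_sum, Rmult_comm.
    apply Rmult_le_compat_l; [lra|apply sum_f_R0_triangle]. }
  apply Rle_trans with (sum_f_R0 (fun _ => w * (INR n * r ^ n)) n).
  - apply sum_Rle. intros k Hk. rewrite Rabs_mult, Rmult_assoc.
    apply Rmult_le_compat; [apply Rabs_pos| |apply Hw; exact Hk|].
    + apply Rmult_le_pos; [apply Rabs_pos|lra].
    + eapply Rle_trans; [apply pow_quot_bound; lra|].
      apply Rmult_le_compat; [apply pos_INR|apply pow_le; lra|apply le_INR, Hk|].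
      apply Rle_pow; assumption.
  - rewrite sum_cte. right. ring.
Qed.

Lemma ddiff_perturb a a' n s t r e : 1 <= r -> Rabs s <= r -> Rabs t <= r ->
  (forall k, (k <= n)%nat -> Rabs (a' k - a k) < e) ->
  Rabs (ddiff a' n s t - ddiff a n s t) <= e * ddiff_const n r.
Proof.
  intros Hr Hs Ht He. rewrite ddiff_sub.
  eapply Rle_trans; [|apply (ddiff_bound (fun k => a' k - a k) n s t r e Hr Hs Ht)].
  - pose proof (Rabs_pos (ddiff (fun k => a' k - a k) n s t)). nra.
  - intros k Hk. apply Rlt_le, He, Hk.
Qed.

Definition lipschitz2_on (r L : R) (G : R -> R -> R) : Prop :=
  forall s s' t t', Rabs s <= r -> Rabs s' <= r -> Rabs t <= r -> Rabs t' <= r ->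
    Rabs (G s t - G s' t') <= L * (Rabs (s - s') + Rabs (t - t')).

Lemma lipschitz2_on_plus r L1 L2 g1 g2 : lipschitz2_on r L1 g1 -> lipschitz2_on r L2 g2 ->
  lipschitz2_on r (L1 + L2) (fun s t => g1 s t + g2 s t).
Proof.
  intros H1 H2 s s' t t' Hs Hs' Ht Ht'.
  replace (g1 s t + g2 s t - (g1 s' t' + g2 s' t'))
    with ((g1 s t - g1 s' t') + (g2 s t - g2 s' t')) by ring.
  eapply Rle_trans; [apply Rabs_triang|]. rewrite Rmult_plus_distr_r.
  apply Rplus_le_compat; [apply H1|apply H2]; assumption.
Qed.

Lemma lipschitz2_on_abs r L g : lipschitz2_on r L g -> lipschitz2_on r L (fun s t => Rabs (g s t)).
Proof.
  intros H s s' t t' Hs Hs' Ht Ht'.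
  eapply Rle_trans; [apply Rabs_triang_inv2|]. apply H; assumption.
Qed.

Lemma ddiff_lipschitz2 a n r : 1 <= r -> exists L, 0 <= L /\ lipschitz2_on r L (ddiff a n).
Proof.
  intros Hr. set (w := sum_f_R0 (fun i => Rabs (a i)) n).
  assert (Hw : 0 <= w) by (apply cond_pos_sum; intros; apply Rabs_pos).
  exists (w * (INR n * INR n * r ^ n) * INR (S n)). split.
  { repeat apply Rmult_le_pos; try apply pos_INR; [exact Hw|apply pow_le; lra]. }
  intros s s' t t' Hs Hs' Ht Ht'. unfold ddiff. rewrite <- minus_sum.
  set (D := Rabs (s - s') + Rabs (t - t')).
  assert (HD : 0 <= D) by (unfold D; pose proof (Rabs_pos (s - s')); pose proof (Rabs_pos (t - t')); lra).
  eapply Rle_trans; [apply sum_f_R0_triangle|].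
  rewrite <- sum_cte, Rmult_comm, scal_sum.
  apply sum_Rle. intros k Hk.
  replace (a k * pow_quot k s t - a k * pow_quot k s' t')
    with (a k * (pow_quot k s t - pow_quot k s' t')) by ring.
  rewrite Rabs_mult, Rmult_assoc.
  apply Rmult_le_compat; [apply Rabs_pos|apply Rabs_pos|unfold w; apply Rabs_le_sum_f_R0; exact Hk|].
  eapply Rle_trans; [apply (pow_quot_lipschitz k s s' t t' r); assumption|].
  apply Rmult_le_compat_r; [exact HD|].
  pose proof (le_INR _ _ Hk). pose proof (pos_INR k).
  pose proof (Rle_pow r k n Hr Hk). pose proof (pow_le r k ltac:(lra)).
  apply Rmult_le_compat; [|lra|apply Rmult_le_compat; lra|assumption].
  apply Rmult_le_pos; lra.
Qed.

Lemma is_poly_knot_ddiff d a b c :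
  is_poly_knot d a b c <->
  forall s t, ~ (ddiff a (d - 2) s t = 0 /\ ddiff b (d - 1) s t = 0 /\ ddiff c d s t = 0).
Proof.
  unfold is_poly_knot, phiX, phiY, phiZ. split.
  - intros [Hinj Himm] s t [Ea [Eb Ec]].
    destruct (Req_dec s t) as [<-|Hst].
    + destruct (Himm s) as [l1 [l2 [l3 [D1 [D2 [D3 Hl]]]]]]. apply Hl.
      rewrite (uniqueness_limite _ _ _ _ D1 (derivable_pt_lim_peval a (d - 2) s)),
              (uniqueness_limite _ _ _ _ D2 (derivable_pt_lim_peval b (d - 1) s)),
              (uniqueness_limite _ _ _ _ D3 (derivable_pt_lim_peval c d s)).
      auto.
    + apply Hst, Hinj.
      * pose proof (ddiffP a (d - 2) s t). rewrite Ea in *. lra.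
      * pose proof (ddiffP b (d - 1) s t). rewrite Eb in *. lra.
      * pose proof (ddiffP c d s t). rewrite Ec in *. lra.
  - intros H. split.
    + intros s t Ea Eb Ec. destruct (Req_dec s t) as [|Hst]; [assumption|].
      exfalso. apply (H s t).
      pose proof (ddiffP a (d - 2) s t). pose proof (ddiffP b (d - 1) s t).
      pose proof (ddiffP c d s t).
      repeat split; apply (Rmult_eq_reg_l (s - t)); lra.
    + intros t. exists (ddiff a (d - 2) t t), (ddiff b (d - 1) t t), (ddiff c d t t).
      repeat split; try apply derivable_pt_lim_peval. apply H.
Qed.

Lemma ddiff_odd_far_neq0 q j : q (S (2 * j)) <> 0 ->
  exists T e, 1 <= T /\ 0 < e /\ forall q',
    (forall k, (k <= S (2 * j))%nat -> Rabs (q' k - q k) < e) ->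
    forall s t, T <= Rmax (Rabs s) (Rabs t) -> ddiff q' (S (2 * j)) s t <> 0.
Proof.
  intros Hq. set (m := S (2 * j)) in *. set (lead := Rabs (q m)).
  assert (Hlead : 0 < lead) by (apply Rabs_pos_lt, Hq).
  set (w := sum_f_R0 (fun i => Rabs (q i)) (2 * j) + 1).
  set (C := w * (INR (S (2 * j)) * INR (2 * j))).
  assert (HC : 0 <= C).
  { pose proof (cond_pos_sum (fun i => Rabs (q i)) (2 * j) (fun i => Rabs_pos _)).
    unfold C, w. repeat apply Rmult_le_pos; try apply pos_INR; lra. }
  exists (Rmax 1 (4 * (C + 1) / lead)), (Rmin 1 (lead / 2)).
  split; [apply Rmax_l|]. split; [apply Rmin_pos; lra|].
  intros q' Hq' s t HT Hz.
  set (r := Rmax (Rabs s) (Rabs t)) in *.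
  assert (Hr1 : 1 <= r) by (eapply Rle_trans; [apply Rmax_l|exact HT]).
  assert (Hr2 : 4 * (C + 1) <= lead * r).
  { assert (Hr : 4 * (C + 1) / lead <= r) by (eapply Rle_trans; [apply Rmax_r|exact HT]).
    apply Rmult_le_compat_l with (r := lead) in Hr; [|lra].
    unfold Rdiv in Hr. rewrite Rmult_comm, Rmult_assoc, Rinv_l in Hr by lra. lra. }
  assert (Hw : forall k, (k <= 2 * j)%nat -> Rabs (q' k) <= w).
  { intros k Hk. pose proof (Hq' k ltac:(lia)). pose proof (Rmin_l 1 (lead / 2)).
    pose proof (Rabs_le_sum_f_R0 q (2 * j) k Hk).
    pose proof (Rabs_triang (q k) (q' k - q k)). replace (q k + (q' k - q k)) with (q' k) in * by ring.
    unfold w. lra. }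
  assert (Hlead' : lead / 2 < Rabs (q' m)).
  { pose proof (Hq' m (le_n _)). pose proof (Rmin_r 1 (lead / 2)).
    pose proof (Rabs_triang_inv (q m) (q m - q' m)).
    replace (q m - (q m - q' m)) with (q' m) in * by ring.
    rewrite (Rabs_minus_sym (q m)) in *. unfold lead in *. lra. }
  pose proof (ddiff_bound q' (2 * j) s t r w Hr1 (Rmax_l _ _) (Rmax_r _ _) Hw) as Hlow.
  assert (Hsplit : ddiff q' (2 * j) s t = - (q' m * pow_quot m s t)).
  { unfold ddiff in *. change m with (S (2 * j)) in *. rewrite tech5 in Hz. lra. }
  pose proof (pow_quot_odd_lower j s t) as Hpq. fold r m in Hpq.
  assert (Hrj : 0 < r ^ (2 * j)) by (apply pow_lt; lra).
  rewrite Hsplit, Rabs_Ropp, Rabs_mult, (Rabs_pos_eq (pow_quot m s t)) in Hlow by lra.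
  unfold ddiff_const in Hlow.
  assert (lead / 2 * (r ^ (2 * j) / 2) * r <= Rabs (q' m) * pow_quot m s t * r).
  { apply Rmult_le_compat_r; [lra|]. apply Rmult_le_compat; lra. }
  assert ((C + 1) * r ^ (2 * j) <= lead / 2 * (r ^ (2 * j) / 2) * r).
  { replace (lead / 2 * (r ^ (2 * j) / 2) * r) with (lead * r / 4 * r ^ (2 * j)) by field.
    apply Rmult_le_compat_r; lra. }
  unfold C in *. nra.
Qed.

Lemma ddiff_far_neq0 d b c : (2 <= d)%nat -> b (d - 1)%nat <> 0 -> c d <> 0 ->
  exists T e, 1 <= T /\ 0 < e /\ forall b' c',
    (forall i, (i <= d - 1)%nat -> Rabs (b' i - b i) < e) ->
    (forall i, (i <= d)%nat -> Rabs (c' i - c i) < e) ->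
    forall s t, T <= Rmax (Rabs s) (Rabs t) -> ddiff b' (d - 1) s t <> 0 \/ ddiff c' d s t <> 0.
Proof.
  intros Hd Hb Hc. destruct (Nat.Even_or_Odd d) as [[j Hj]|[j Hj]].
  - replace (d - 1)%nat with (S (2 * (j - 1))) in * by lia.
    destruct (ddiff_odd_far_neq0 b (j - 1) Hb) as [T [e [HT [He Hfar]]]].
    exists T, e. repeat split; try assumption.
    intros b' c' Hb' _ s t Hst. left. apply (Hfar b'); assumption.
  - replace d with (S (2 * j)) in * by lia.
    destruct (ddiff_odd_far_neq0 c j Hc) as [T [e [HT [He Hfar]]]].
    exists T, e. repeat split; try assumption.
    intros b' c' _ Hc' s t Hst. right. apply (Hfar c'); assumption.
Qed.

Lemma continuity_pt_lipschitz f x0 L : 0 <= L ->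
  (forall x, Rabs (x - x0) < 1 -> Rabs (f x - f x0) <= L * Rabs (x - x0)) ->
  continuity_pt f x0.
Proof.
  intros HL Hf e He. exists (Rmin 1 (e / (L + 1))). split.
  { apply Rmin_pos; [lra|apply Rdiv_lt_0_compat; lra]. }
  intros x [_ Hx]. simpl in *. unfold R_dist in *.
  assert (Hx1 : Rabs (x - x0) < 1) by (eapply Rlt_le_trans; [exact Hx|apply Rmin_l]).
  assert (Hx2 : Rabs (x - x0) * (L + 1) < e).
  { apply Rmult_lt_compat_r with (r := L + 1) in Hx; [|lra].
    eapply Rlt_le_trans; [exact Hx|].
    apply Rle_trans with (e / (L + 1) * (L + 1)); [apply Rmult_le_compat_r, Rmin_r; lra|].
    right. field. lra. }
  eapply Rle_lt_trans; [apply Hf, Hx1|]. pose proof (Rabs_pos (x - x0)). nra.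
Qed.

Section CompactSquare.

Variables (T L : R) (G : R -> R -> R).
Hypotheses (HT : 0 <= T) (HL : 0 <= L) (HG : lipschitz2_on (T + 1) L G).

Lemma lipschitz2_on_continuity_pt (g : R -> R) x0 :
  Rabs x0 <= T ->
  (forall x, Rabs x <= T + 1 -> Rabs (g x - g x0) <= L * Rabs (x - x0)) ->
  continuity_pt g x0.
Proof.
  intros Hx0 Hg. apply continuity_pt_lipschitz with L; [exact HL|].
  intros x Hx. apply Hg.
  apply Rabs_le_iff. apply Rabs_le_iff in Hx0. apply Rabs_def2 in Hx. lra.
Qed.

Lemma lipschitz2_on_argmin_r :
  exists tm : R -> R, forall s, -T <= tm s <= T /\
    (Rabs s <= T + 1 -> forall t, -T <= t <= T -> G s (tm s) <= G s t).
Proof.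
  assert (Hex : forall s, exists t0, -T <= t0 <= T /\
    (Rabs s <= T + 1 -> forall t, -T <= t <= T -> G s t0 <= G s t)).
  { intros s. destruct (Rle_dec (Rabs s) (T + 1)) as [Hs|Hs].
    - destruct (continuity_ab_min (G s) (- T) T ltac:(lra)) as [t0 [Hmin Ht0]].
      + intros t Ht. apply lipschitz2_on_continuity_pt; [apply Rabs_le_iff; exact Ht|].
        intros x Hx. replace (Rabs (x - t)) with (Rabs (s - s) + Rabs (x - t))
          by (rewrite Rminus_diag, Rabs_R0; ring).
        apply HG; try assumption. apply Rabs_le_iff. lra.
      + exists t0. auto.
    - exists 0. split; [lra|]. intros; lra. }
  exists (fun s => proj1_sig (constructive_indefinite_description _ (Hex s))).
  intros s. exact (proj2_sig (constructive_indefinite_description _ (Hex s))).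
Qed.

Lemma lipschitz2_on_lower_bound :
  (forall s t, Rabs s <= T -> Rabs t <= T -> 0 < G s t) ->
  exists mu, 0 < mu /\ forall s t, Rabs s <= T -> Rabs t <= T -> mu <= G s t.
Proof.
  intros Hpos. destruct lipschitz2_on_argmin_r as [tm Htm].
  assert (Htm_bound : forall s, Rabs (tm s) <= T + 1)
    by (intros s; apply Rabs_le_iff; destruct (Htm s); lra).
  assert (Hm : forall x c, Rabs x <= T + 1 -> Rabs c <= T + 1 ->
            Rabs (G x (tm x) - G c (tm c)) <= L * Rabs (x - c)).
  { intros x c Hx Hc.
    pose proof (HG x c (tm c) (tm c) Hx Hc (Htm_bound c) (Htm_bound c)) as H1.
    pose proof (HG x c (tm x) (tm x) Hx Hc (Htm_bound x) (Htm_bound x)) as H2.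
    rewrite Rminus_diag, Rabs_R0, Rplus_0_r in H1, H2.
    pose proof (proj2 (Htm x) Hx (tm c) (proj1 (Htm c))).
    pose proof (proj2 (Htm c) Hc (tm x) (proj1 (Htm x))).
    apply Rabs_le_iff. apply Rabs_le_iff in H1, H2. lra. }
  destruct (continuity_ab_min (fun s => G s (tm s)) (- T) T ltac:(lra)) as [s0 [Hmin Hs0]].
  { intros c Hc. apply lipschitz2_on_continuity_pt; [apply Rabs_le_iff; exact Hc|].
    intros x Hx. apply Hm; [exact Hx|]. apply Rabs_le_iff. lra. }
  exists (G s0 (tm s0)). split.
  - apply Hpos; apply Rabs_le_iff; [exact Hs0|apply Htm].
  - intros s t Hs Ht. apply Rle_trans with (G s (tm s)).
    + apply Hmin, Rabs_le_iff, Hs.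
    + apply (proj2 (Htm s)); [lra|apply Rabs_le_iff, Ht].
Qed.

End CompactSquare.

Lemma close_le d e e' a b c a' b' c' : e <= e' ->
  close d e a b c a' b' c' -> close d e' a b c a' b' c'.
Proof.
  intros Hee [Ha [Hb Hc]].
  repeat split; intros i Hi; eapply Rlt_le_trans; eauto.
Qed.

Lemma inC_stable d a b c : inC d a b c ->
  exists eps, 0 < eps /\ forall a' b' c', close d eps a b c a' b' c' -> inC d a' b' c'.
Proof.
  intros [Ha [Hb Hc]].
  assert (Hneq0 : forall u u', Rabs (u' - u) < Rabs u -> u' <> 0).
  { intros u u' H ->. rewrite Rminus_0_l, Rabs_Ropp in H. lra. }
  pose proof (Rabs_pos_lt _ Ha). pose proof (Rabs_pos_lt _ Hb). pose proof (Rabs_pos_lt _ Hc).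
  exists (Rmin (Rabs (a (d - 2)%nat)) (Rmin (Rabs (b (d - 1)%nat)) (Rabs (c d)))).
  split; [repeat apply Rmin_pos; assumption|].
  intros a' b' c' [Ca [Cb Cc]]. repeat split.
  - apply (Hneq0 (a (d - 2)%nat)). eapply Rlt_le_trans; [apply Ca, le_n|apply Rmin_l].
  - apply (Hneq0 (b (d - 1)%nat)). eapply Rlt_le_trans; [apply Cb, le_n|].
    eapply Rle_trans; [apply Rmin_r|apply Rmin_l].
  - apply (Hneq0 (c d)). eapply Rlt_le_trans; [apply Cc, le_n|].
    eapply Rle_trans; [apply Rmin_r|apply Rmin_r].
Qed.

Lemma Rabs_sum3_pos x y z : ~ (x = 0 /\ y = 0 /\ z = 0) -> 0 < Rabs x + Rabs y + Rabs z.
Proof.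
  intros H. pose proof (Rabs_pos x). pose proof (Rabs_pos y). pose proof (Rabs_pos z).
  destruct (Req_dec x 0) as [Hx|Hx]; [destruct (Req_dec y 0) as [Hy|Hy]|].
  - assert (Hz : z <> 0) by tauto. pose proof (Rabs_pos_lt z Hz). lra.
  - pose proof (Rabs_pos_lt y Hy). lra.
  - pose proof (Rabs_pos_lt x Hx). lra.
Qed.

Lemma is_poly_knot_stable d a b c : (2 <= d)%nat -> inC d a b c -> is_poly_knot d a b c ->
  exists eps, 0 < eps /\ forall a' b' c', close d eps a b c a' b' c' -> is_poly_knot d a' b' c'.
Proof.
  intros Hd [_ [Hb Hc]] Hknot. rewrite is_poly_knot_ddiff in Hknot.
  destruct (ddiff_far_neq0 d b c Hd Hb Hc) as [T [e0 [HT [He0 Hfar]]]].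
  set (G s t := Rabs (ddiff a (d - 2) s t) + Rabs (ddiff b (d - 1) s t) + Rabs (ddiff c d s t)).
  assert (HGlip : exists L, 0 <= L /\ lipschitz2_on (T + 1) L G).
  { destruct (ddiff_lipschitz2 a (d - 2) (T + 1)) as [La [HLa Ha]]; [lra|].
    destruct (ddiff_lipschitz2 b (d - 1) (T + 1)) as [Lb [HLb Hb']]; [lra|].
    destruct (ddiff_lipschitz2 c d (T + 1)) as [Lc [HLc Hc']]; [lra|].
    exists (La + Lb + Lc). split; [lra|].
    repeat apply lipschitz2_on_plus; apply lipschitz2_on_abs; assumption. }
  destruct HGlip as [L [HL HGlip]].
  destruct (lipschitz2_on_lower_bound T L G ltac:(lra) HL HGlip) as [mu [Hmu HGmu]].
  { intros s t _ _. apply Rabs_sum3_pos, Hknot. }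
  set (K := ddiff_const (d - 2) T + ddiff_const (d - 1) T + ddiff_const d T).
  assert (HK : 0 <= K).
  { pose proof (ddiff_const_ge0 (d - 2) T). pose proof (ddiff_const_ge0 (d - 1) T).
    pose proof (ddiff_const_ge0 d T). unfold K. lra. }
  set (eps := Rmin e0 (mu / (K + 1))).
  assert (Heps : 0 < eps) by (apply Rmin_pos; [exact He0|apply Rdiv_lt_0_compat; lra]).
  (* on the square |s|, |t| <= T the perturbed divided differences move by at most
     eps * K < mu in total *)
  assert (HepsK : eps * K < mu).
  { assert (eps * (K + 1) <= mu).
    { apply Rle_trans with (mu / (K + 1) * (K + 1)); [apply Rmult_le_compat_r, Rmin_r; lra|].
      right. field. lra. }
    nra. }
  exists eps. split; [exact Heps|].
  intros a' b' c' [Ca [Cb Cc]]. apply is_poly_knot_ddiff. intros s t [Za [Zb Zc]].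
  destruct (Rle_dec T (Rmax (Rabs s) (Rabs t))) as [Hst|Hst].
  - assert (Hmin : eps <= e0) by apply Rmin_l.
    destruct (Hfar b' c') with s t as [Hnb|Hnc]; try contradiction; try exact Hst.
    + intros i Hi. eapply Rlt_le_trans; [apply Cb, Hi|exact Hmin].
    + intros i Hi. eapply Rlt_le_trans; [apply Cc, Hi|exact Hmin].
  - assert (Hs : Rabs s <= T) by (pose proof (Rmax_l (Rabs s) (Rabs t)); lra).
    assert (Ht : Rabs t <= T) by (pose proof (Rmax_r (Rabs s) (Rabs t)); lra).
    pose proof (ddiff_perturb a a' (d - 2) s t T eps HT Hs Ht Ca) as Pa.
    pose proof (ddiff_perturb b b' (d - 1) s t T eps HT Hs Ht Cb) as Pb.
    pose proof (ddiff_perturb c c' d s t T eps HT Hs Ht Cc) as Pc.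
    rewrite Za, Rminus_0_l, Rabs_Ropp in Pa.
    rewrite Zb, Rminus_0_l, Rabs_Ropp in Pb.
    rewrite Zc, Rminus_0_l, Rabs_Ropp in Pc.
    pose proof (HGmu s t Hs Ht). unfold G, K in *. lra.
Qed.

Lemma inQ_open d a b c : (2 <= d)%nat -> inQ d a b c ->
  exists eps, 0 < eps /\ forall a' b' c', close d eps a b c a' b' c' -> inQ d a' b' c'.
Proof.
  intros Hd [HC Hknot].
  destruct (inC_stable d a b c HC) as [e1 [He1 HC']].
  destruct (is_poly_knot_stable d a b c Hd HC Hknot) as [e2 [He2 Hknot']].
  exists (Rmin e1 e2). split; [apply Rmin_pos; assumption|].
  intros a' b' c' Hclose. split.
  - apply HC'. apply close_le with (Rmin e1 e2); [apply Rmin_l|exact Hclose].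
  - apply Hknot'. apply close_le with (Rmin e1 e2); [apply Rmin_r|exact Hclose].
Qed.

Theorem mainTheorem11 : forall d : nat, (2 <= d)%nat ->
  (forall a b c : nat -> R, inQ d a b c ->
     exists eps : R, 0 < eps /\
       forall a' b' c' : nat -> R, inC d a' b' c' ->
         close d eps a b c a' b' c' -> inQ d a' b' c') /\
  (forall a b c : nat -> R, inQ d a b c ->
     exists eps : R, 0 < eps /\
       forall a' b' c' : nat -> R,
         close d eps a b c a' b' c' -> inQ d a' b' c').
Proof.
  intros d Hd. split.
  - intros a b c Hq. destruct (inQ_open d a b c Hd Hq) as [eps [Heps Hclose]].
    exists eps. split; [exact Heps|]. intros a' b' c' _. apply Hclose.
  - intros a b c Hq. exact (inQ_open d a b c Hd Hq).
Qed.
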